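(* Let $d, N, K \geq 1$ be integers, let $\mathbf{y}_1, \ldots, \mathbf{y}_N \in \mathbb{R}^d$, and let $\mathbf{Y} \in \mathbb{R}^{d \times N}$ be the matrix with columns $\mathbf{y}_1, \ldots, \mathbf{y}_N$; assume $\mathbf{Y} \neq 0$. Let $\rho_k^{[i]} \geq 0$ ($i \in \{1,\ldots,N\}$, $k \in \{1,\ldots,K\}$) satisfy $\sum_{k=1}^K \rho_k^{[i]} = 1$ for every $i$. For $k \in \{1,\ldots,K\}$ let $\mathbf{A}_k = \sum_{i=1}^N \rho_k^{[i]} \mathbf{y}_i \mathbf{y}_i^\mathrm{T}$. For every $\delta > 0$, set $\tau := \delta / \|\mathbf{Y}\|_\mathrm{F}^2$ and \[ \tilde{\mathbf{A}}_k = \sum_{\substack{i=1 \\ \rho_k^{[i]} \geq \tau}}^N \rho_k^{[i]} \mathbf{y}_i \mathbf{y}_i^\mathrm{T}. \] Then $|\lambda_1(\mathbf{A}_k) - \lambda_1(\tilde{\mathbf{A}}_k)| \leq \delta$.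
   Context: $\lambda_1(\mathbf{M})$ denotes the largest eigenvalue of a symmetric matrix $\mathbf{M}$; $\|\cdot\|_\mathrm{F}$ is the Frobenius norm. *)

From HB Require Import structures.
From mathcomp Require Import all_boot all_order all_algebra.
From mathcomp Require Import classical_sets reals.
Set Implicit Arguments. Unset Strict Implicit. Unset Printing Implicit Defensive.
Import Order.TTheory GRing.Theory Num.Theory.
Local Open Scope ring_scope.
Local Open Scope classical_set_scope.

(* lambda_1(M): the largest eigenvalue of a real square matrix M (for symmetric
   real M the set of eigenvalues is finite and nonempty, so this is its maximum). *)
Definition lambda1 {R : realType} {n : nat} (M : 'M[R]_n) : R :=
  sup [set a : R | eigenvalue M a].

Definition frob2 {R : realType} {m n : nat} (Y : 'M[R]_(m, n)) : R :=
  \sum_(i < m) \sum_(j < n) Y i j ^+ 2.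

Definition Amat {R : realType} {d N K : nat} (Y : 'M[R]_(d, N))
  (rho : 'I_N -> 'I_K -> R) (k : 'I_K) : 'M[R]_d :=
  \sum_(i < N) rho i k *: (col i Y *m (col i Y)^T).

Definition Atilde {R : realType} {d N K : nat} (Y : 'M[R]_(d, N))
  (rho : 'I_N -> 'I_K -> R) (tau : R) (k : 'I_K) : 'M[R]_d :=
  \sum_(i < N | tau <= rho i k) rho i k *: (col i Y *m (col i Y)^T).

(* For a real symmetric matrix M, lambda_1(M) is the supremum m of the Rayleigh
   quotient v^T M v / |v|^2.  The supremum bounds every eigenvalue, and it is an
   eigenvalue: otherwise B = m I - M is positive semidefinite and invertible, hence
   coercive, |v|^2 <= c v^T B v, and m - 1/c would be a smaller upper bound.
   Now A_k is the truncated matrix plus the Gram sum E of the discarded terms, whose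
   weights are all below tau; E is positive semidefinite with
   v^T E v <= tau ||Y||_F^2 |v|^2 <= delta |v|^2, and adding such a perturbation moves
   the supremum of the Rayleigh quotient by at most delta. *)

From HB Require Import structures.
From mathcomp Require Import all_boot all_order all_algebra.
From mathcomp Require Import classical_sets reals.
From mathcomp Require Import ring lra.
Set Implicit Arguments. Unset Strict Implicit. Unset Printing Implicit Defensive.
Import Order.TTheory GRing.Theory Num.Theory.
Local Open Scope ring_scope.

Section BilinearForm.
Variables (R : comPzRingType) (n : nat).
Implicit Types (M : 'M[R]_n) (x y : 'rV[R]_n).

Definition bilin M x y : R := (x *m M *m y^T) 0 0.

Definition sqnorm x : R := (x *m x^T) 0 0.

Lemma bilin1 x : bilin 1%:M x x = sqnorm x.
Proof. by rewrite /bilin mulmx1. Qed.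

Lemma bilinDM M1 M2 x y : bilin (M1 + M2) x y = bilin M1 x y + bilin M2 x y.
Proof. by rewrite /bilin mulmxDr mulmxDl mxE. Qed.

Lemma bilinNM M x y : bilin (- M) x y = - bilin M x y.
Proof. by rewrite /bilin mulmxN mulNmx mxE. Qed.

Lemma bilinZM c M x y : bilin (c *: M) x y = c * bilin M x y.
Proof. by rewrite /bilin -scalemxAr -scalemxAl mxE. Qed.

Lemma bilin_sumM I (r : seq I) (P : pred I) (F : I -> 'M[R]_n) x y :
  bilin (\sum_(i <- r | P i) F i) x y = \sum_(i <- r | P i) bilin (F i) x y.
Proof. by rewrite /bilin mulmx_sumr mulmx_suml summxE. Qed.

Lemma bilinDl M x1 x2 y : bilin M (x1 + x2) y = bilin M x1 y + bilin M x2 y.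
Proof. by rewrite /bilin !mulmxDl mxE. Qed.

Lemma bilinDr M x y1 y2 : bilin M x (y1 + y2) = bilin M x y1 + bilin M x y2.
Proof. by rewrite /bilin linearD /= mulmxDr mxE. Qed.

Lemma bilinZl M c x y : bilin M (c *: x) y = c * bilin M x y.
Proof. by rewrite /bilin -!scalemxAl mxE. Qed.

Lemma bilinZr M c x y : bilin M x (c *: y) = c * bilin M x y.
Proof. by rewrite /bilin linearZ /= -scalemxAr mxE. Qed.

Lemma bilinC M x y : M^T = M -> bilin M y x = bilin M x y.
Proof.
move=> sM; rewrite /bilin.
have -> : y *m M *m x^T = (x *m M *m y^T)^T by rewrite !trmx_mul trmxK sM mulmxA.
by rewrite mxE.
Qed.
End BilinearForm.

Lemma sqr_le_of_quadratic_ge0 (R : realFieldType) (a b c : R) :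
  0 <= c -> (forall t, 0 <= a + 2 * t * b + t ^+ 2 * c) -> b ^+ 2 <= a * c.
Proof.
move=> c_ge0 q_ge0; have [c_gt0 | c_le0] := ltrP 0 c.
  have := q_ge0 (- b / c).
  have -> : a + 2 * (- b / c) * b + (- b / c) ^+ 2 * c = a - b ^+ 2 / c.
    by field; rewrite gt_eqF.
  by rewrite subr_ge0 ler_pdivrMr.
have c0 : c = 0 by apply/eqP; rewrite eq_le c_le0 c_ge0.
subst c.
have [-> | b_neq0] := eqVneq b 0; first by rewrite expr0n mulr0.
have := q_ge0 (- (a + 1) / (2 * b)).
have -> : a + 2 * (- (a + 1) / (2 * b)) * b + (- (a + 1) / (2 * b)) ^+ 2 * 0 = -1.
  by field.
by rewrite oppr_ge0 ler10.
Qed.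

Section PositiveForms.
Variables (R : realFieldType) (n : nat).
Implicit Types (M : 'M[R]_n) (x y : 'rV[R]_n).

Lemma sqnormE x : sqnorm x = \sum_j x 0 j ^+ 2.
Proof. by rewrite /sqnorm mxE; apply: eq_bigr => j _; rewrite mxE expr2. Qed.

Lemma sqnorm_ge0 x : 0 <= sqnorm x.
Proof. by rewrite sqnormE sumr_ge0 // => j _; rewrite sqr_ge0. Qed.

Lemma sqnorm_gt0 x : x != 0 -> 0 < sqnorm x.
Proof.
move=> x_neq0; rewrite lt_def sqnorm_ge0 andbT; apply: contraNneq x_neq0.
rewrite sqnormE => /(psumr_eq0P (fun j _ => sqr_ge0 (x 0 j))) x0.
by apply/eqP/rowP => j; apply/eqP; rewrite mxE -sqrf_eq0 x0.
Qed.

Lemma bilin_CauchySchwarz M x y : M^T = M -> (forall w, 0 <= bilin M w w) ->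
  bilin M x y ^+ 2 <= bilin M x x * bilin M y y.
Proof.
move=> sM psdM; apply: sqr_le_of_quadratic_ge0 => // t.
have := psdM (x + t *: y).
rewrite bilinDl !bilinDr !bilinZl !bilinZr (bilinC x y sM).
by congr (_ <= _); ring.
Qed.

Lemma sqnorm_CauchySchwarz x y : bilin 1%:M x y ^+ 2 <= sqnorm x * sqnorm y.
Proof.
rewrite -!bilin1; apply: bilin_CauchySchwarz => [|w]; first exact: trmx1.
by rewrite bilin1 sqnorm_ge0.
Qed.

End PositiveForms.

Section FrobeniusBounds.
Variable R : realType.

Lemma frob2_ge0 m n (P : 'M[R]_(m, n)) : 0 <= frob2 P.
Proof. by rewrite sumr_ge0 // => i _; rewrite sumr_ge0 // => j _; rewrite sqr_ge0. Qed.

Lemma sqnorm_mul_le m n (x : 'rV[R]_m) (P : 'M[R]_(m, n)) :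
  sqnorm (x *m P) <= frob2 P * sqnorm x.
Proof.
rewrite [sqnorm _]sqnormE /frob2 exchange_big mulr_suml; apply: ler_sum => j _.
have -> : (x *m P) 0 j = bilin 1%:M x (col j P)^T.
  by rewrite /bilin mulmx1 trmxK !mxE; apply: eq_bigr => i _; rewrite !mxE.
rewrite mulrC; apply: (le_trans (sqnorm_CauchySchwarz _ _)).
by rewrite ler_wpM2l ?sqnorm_ge0 // sqnormE; apply: ler_sum => i _; rewrite !mxE.
Qed.

Lemma bilin_le_frob2 n (M : 'M[R]_n) x : bilin M x x <= (frob2 M + 1) * sqnorm x.
Proof.
have := sqnorm_CauchySchwarz (x *m M) x.
have -> : bilin 1%:M (x *m M) x = bilin M x x by rewrite /bilin mulmx1.
have := sqnorm_mul_le x M; have := frob2_ge0 M; have := sqnorm_ge0 x.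
have := sqnorm_ge0 (x *m M); nra.
Qed.

Section PositiveSemidefinite.
Variables (n : nat) (B : 'M[R]_n).
Hypothesis B_sym : B^T = B.
Hypothesis B_psd : forall v : 'rV[R]_n, 0 <= bilin B v v.

Lemma sqnorm_mul_le_psd w : sqnorm (w *m B) <= (frob2 B + 1) * bilin B w w.
Proof.
have cs := bilin_CauchySchwarz w (w *m B) B_sym B_psd.
rewrite -[bilin B w (w *m B)]/(sqnorm (w *m B)) in cs.
have [-> | wB_neq0] := eqVneq (sqnorm (w *m B)) 0.
  by rewrite mulr_ge0 ?B_psd // addr_ge0 ?frob2_ge0.
have wB_gt0 : 0 < sqnorm (w *m B) by rewrite lt_def wB_neq0 sqnorm_ge0.
have := bilin_le_frob2 B (w *m B); have := B_psd w; have := frob2_ge0 B; nra.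
Qed.

Lemma psd_unit_coercive : B \in unitmx ->
  exists2 c, 0 < c & forall w, sqnorm w <= c * bilin B w w.
Proof.
move=> B_unit; exists (frob2 (invmx B) * (frob2 B + 1) + 1) => [|w].
  by rewrite ltr_pwDr // mulr_ge0 ?frob2_ge0 // addr_ge0 ?frob2_ge0.
have := sqnorm_mul_le (w *m B) (invmx B); rewrite mulmxK //.
have := sqnorm_mul_le_psd w; have := sqnorm_ge0 (w *m B).
have := B_psd w; have := frob2_ge0 (invmx B); have := frob2_ge0 B; nra.
Qed.

End PositiveSemidefinite.

End FrobeniusBounds.

Section Rayleigh.
Variables (R : realType) (n : nat).
Hypothesis n_gt0 : (0 < n)%N.
Implicit Types M : 'M[R]_n.
Local Open Scope classical_set_scope.

Definition rayleigh M : set R :=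
  [set bilin M v v / sqnorm v | v in [set v : 'rV[R]_n | v != 0]].

Definition rayleigh_sup M : R := sup (rayleigh M).

Lemma rayleigh_neq0 M : rayleigh M !=set0.
Proof.
pose v : 'rV[R]_n := const_mx 1.
have v_neq0 : v != 0.
  by apply/eqP => /rowP/(_ (Ordinal n_gt0))/eqP; rewrite !mxE oner_eq0.
by exists (bilin M v v / sqnorm v), v.
Qed.

Lemma rayleigh_ubound M : has_ubound (rayleigh M).
Proof.
exists (frob2 M + 1) => _ [v v_neq0 <-].
by rewrite ler_pdivrMr ?sqnorm_gt0 ?bilin_le_frob2.
Qed.

Lemma bilin_le_rayleigh_sup M v : bilin M v v <= rayleigh_sup M * sqnorm v.
Proof.
have [-> | v_neq0] := eqVneq v 0; first by rewrite /bilin /sqnorm !mul0mx mxE mulr0.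
rewrite -ler_pdivrMr ?sqnorm_gt0 //; apply: ub_le_sup; first exact: rayleigh_ubound.
by exists v.
Qed.

Lemma rayleigh_sup_le M c :
  (forall v, bilin M v v <= c * sqnorm v) -> rayleigh_sup M <= c.
Proof.
move=> Mc; apply: ge_sup; first exact: rayleigh_neq0.
by move=> _ [v v_neq0 <-]; rewrite ler_pdivrMr ?sqnorm_gt0.
Qed.

Lemma eigenvalue_le_rayleigh_sup M a : eigenvalue M a -> a <= rayleigh_sup M.
Proof.
case/eigenvalueP=> v vM v_neq0; apply: ub_le_sup; first exact: rayleigh_ubound.
exists v => //; rewrite /bilin vM -scalemxAl mxE -/(sqnorm v).
by rewrite mulfK // gt_eqF ?sqnorm_gt0.
Qed.

Lemma rayleigh_sup_eigenvalue M : M^T = M -> eigenvalue M (rayleigh_sup M).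
Proof.
move=> M_sym; apply: contraT => not_eig.
set m := rayleigh_sup M; pose B := m%:M - M.
have qB v : bilin B v v = m * sqnorm v - bilin M v v.
  by rewrite bilinDM bilinNM -scalemx1 bilinZM bilin1.
have B_sym : B^T = B by rewrite linearB /= tr_scalar_mx M_sym.
have B_psd v : 0 <= bilin B v v by rewrite qB subr_ge0 bilin_le_rayleigh_sup.
have B_unit : B \in unitmx.
  rewrite -[B]opprK -scaleN1r unitmxZ ?unitrN1 // opprB -row_free_unit -kermx_eq0.
  exact: negbNE not_eig.
have [c c_gt0 B_coercive] := psd_unit_coercive B_sym B_psd B_unit.
have : m <= m - c^-1.
  apply: rayleigh_sup_le => v; have := B_coercive v; rewrite qB -ler_pdivrMl //.
  by rewrite mulrBl; lra.
by rewrite lerDl oppr_ge0 invr_le0 leNgt c_gt0.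
Qed.

Lemma lambda1_rayleigh_sup M : M^T = M -> lambda1 M = rayleigh_sup M.
Proof.
move=> M_sym; have M_eig := rayleigh_sup_eigenvalue M_sym.
have M_ub : ubound [set a | eigenvalue M a] (rayleigh_sup M).
  by move=> a; exact: eigenvalue_le_rayleigh_sup.
apply/eqP; rewrite eq_le ge_sup //=; last by exists (rayleigh_sup M).
by apply: ub_le_sup; first by exists (rayleigh_sup M).
Qed.

Lemma lambda1_psd_perturbation M E delta : M^T = M -> E^T = E ->
    (forall v, 0 <= bilin E v v) -> (forall v, bilin E v v <= delta * sqnorm v) ->
  `|lambda1 (M + E) - lambda1 M| <= delta.
Proof.
move=> M_sym E_sym E_psd E_le.
have ME_sym : (M + E)^T = M + E by rewrite linearD /= M_sym E_sym.
rewrite !lambda1_rayleigh_sup //.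
have le_ME : rayleigh_sup M <= rayleigh_sup (M + E).
  apply: rayleigh_sup_le => v; apply: le_trans (bilin_le_rayleigh_sup _ v).
  by rewrite bilinDM lerDl.
have ME_le : rayleigh_sup (M + E) <= rayleigh_sup M + delta.
  apply: rayleigh_sup_le => v; rewrite bilinDM mulrDl.
  exact: lerD (bilin_le_rayleigh_sup _ v) (E_le v).
by rewrite ler_norml; apply/andP; split; lra.
Qed.

End Rayleigh.

Section WeightedGram.
Variables (R : realType) (d N : nat) (Y : 'M[R]_(d, N)).

Lemma sum_frob2_col : \sum_i frob2 (col i Y) = frob2 Y.
Proof.
rewrite /frob2 exchange_big; apply: eq_bigr => i _; apply: eq_bigr => j _.
by rewrite big_ord1 mxE.
Qed.

Variables (c : 'I_N -> R) (P : pred 'I_N).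

Lemma tr_weighted_gram :
  (\sum_(i | P i) c i *: (col i Y *m (col i Y)^T))^T =
  \sum_(i | P i) c i *: (col i Y *m (col i Y)^T).
Proof.
by rewrite linear_sum; apply: eq_bigr => i _; rewrite linearZ /= trmx_mul trmxK.
Qed.

Lemma bilin_weighted_gram v :
  bilin (\sum_(i | P i) c i *: (col i Y *m (col i Y)^T)) v v =
  \sum_(i | P i) c i * sqnorm (v *m col i Y).
Proof.
rewrite bilin_sumM; apply: eq_bigr => i _.
by rewrite bilinZM /bilin /sqnorm trmx_mul !mulmxA.
Qed.

Hypothesis c_ge0 : forall i, P i -> 0 <= c i.

Lemma bilin_weighted_gram_ge0 v :
  0 <= bilin (\sum_(i | P i) c i *: (col i Y *m (col i Y)^T)) v v.
Proof.
by rewrite bilin_weighted_gram sumr_ge0 // => i Pi; rewrite mulr_ge0 ?c_ge0 ?sqnorm_ge0.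
Qed.

Lemma bilin_weighted_gram_le t v : 0 <= t -> (forall i, P i -> c i <= t) ->
  bilin (\sum_(i | P i) c i *: (col i Y *m (col i Y)^T)) v v <= t * frob2 Y * sqnorm v.
Proof.
move=> t_ge0 c_le; rewrite bilin_weighted_gram -sum_frob2_col mulr_sumr mulr_suml.
have term_ge0 i : 0 <= t * frob2 (col i Y) * sqnorm v.
  by rewrite !mulr_ge0 ?frob2_ge0 ?sqnorm_ge0.
apply: le_trans (_ : \sum_(i | P i) t * frob2 (col i Y) * sqnorm v <= _).
  apply: ler_sum => i Pi; rewrite -mulrA.
  by apply: ler_pM; rewrite ?c_ge0 ?c_le ?sqnorm_ge0 ?sqnorm_mul_le.
by rewrite [leRHS](bigID P) /= lerDl sumr_ge0.
Qed.

End WeightedGram.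

Theorem lemma1 (R : realType) (d N K : nat) (hd : (1 <= d)%N) (hN : (1 <= N)%N)
  (hK : (1 <= K)%N) (Y : 'M[R]_(d, N)) (hY : Y != 0)
  (rho : 'I_N -> 'I_K -> R)
  (hrho0 : forall i k, 0 <= rho i k)
  (hrho1 : forall i, \sum_(k < K) rho i k = 1)
  (delta : R) (hdelta : 0 < delta) (k : 'I_K) :
  `| lambda1 (Amat Y rho k) - lambda1 (Atilde Y rho (delta / frob2 Y) k) | <= delta.
Proof.
set tau := delta / frob2 Y.
have tau_ge0 : 0 <= tau by rewrite divr_ge0 ?frob2_ge0 ?ltW.
have tau_frob2 : tau * frob2 Y <= delta.
  by have [-> | ?] := eqVneq (frob2 Y) 0; [rewrite mulr0 ltW | rewrite divfK].
rewrite /Amat (bigID (fun i => tau <= rho i k)) /= -/(Atilde Y rho tau k).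
apply: lambda1_psd_perturbation; rewrite ?tr_weighted_gram //.
- by move=> v; apply: bilin_weighted_gram_ge0.
- move=> v; apply: le_trans (ler_wpM2r (sqnorm_ge0 v) tau_frob2).
  by apply: bilin_weighted_gram_le => // i; rewrite -ltNge => /ltW.
Qed.
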